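(* Let $0<p<\infty$, $m\in\mathbb{N}$, and let $E_1,\dots,E_m,F$ be Banach spaces over $\mathbb{K}=\mathbb{R}$ or $\mathbb{C}$. Then $$\eta^{m\text{-}mult}_{(p,p)}(E_1,\dots,E_m;F)\le \frac mp \ \text{ if } 0<p\le 2,\qquad \eta^{m\text{-}mult}_{(p,p)}(E_1,\dots,E_m;F)\le \frac m2 \ \text{ if } p\ge 2.$$
   Context: For vectors $x_1,\dots,x_n$ in a Banach space $E$ and $q>0$, $\|(x_k)_{k=1}^n\|_{w,q}:=\sup_{\varphi\in B_{E^*}}\left(\sum_{k=1}^n|\varphi(x_k)|^q\right)^{1/q}$, where $B_{E^*}$ is the closed unit ball of the dual. $\mathcal{L}(E_1,\dots,E_m;F)$ is the space of bounded $m$-linear maps. For $p,q>0$, the multilinear $m$-index of $(p,q)$-summability $\eta^{m\text{-}mult}_{(p,q)}(E_1,\dots,E_m;F)$ is the infimum of all real numbers $s$ with the property: for every $T\in\mathcal{L}(E_1,\dots,E_m;F)$ there is a constant $C\ge0$ (depending only on $m$ and $T$) such that $$\left(\sum_{k_1,\dots,k_m=1}^n\|T(x^{(1)}_{k_1},\dots,x^{(m)}_{k_m})\|^p\right)^{1/p}\le C n^{s}\prod_{i=1}^m\|(x^{(i)}_{k})_{k=1}^n\|_{w,q}$$ for all positive integers $n$ and all $x^{(i)}_k\in E_i$, $1\le k\le n$, $1\le i\le m$. *)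

From HB Require Import structures.
From mathcomp Require Import all_boot all_order all_algebra.
From mathcomp Require Import all_classical all_reals all_analysis.
From mathcomp Require Import complex.
Set Implicit Arguments. Unset Strict Implicit. Unset Printing Implicit Defensive.
Import Order.TTheory GRing.Theory Num.Theory.
Import numFieldNormedType.Exports.
Local Open Scope classical_set_scope.
Local Open Scope ring_scope.

(* Scalars: K is the scalar field (R or R[i]); norms of vectors take values in K
   (they are nonnegative reals inside K); [nr : K -> R] reads such a real value
   as an element of the real field R.  It is instantiated by [id] for K = R and
   by [Re] for K = R[i]. *)

Section Defs.
Variables (R : realType) (K : numFieldType) (nr : K -> R).

Definition dual_ball (E : normedModType K) : set (E -> K) :=
  [set phi | (forall (a : K) (x y : E), phi (a *: x + y) = a * phi x + phi y)
             /\ continuous phi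
             /\ (forall x : E, nr `|phi x| <= nr `|x|)].

Definition weak_norm (E : normedModType K) (q : R) (n : nat) (x : 'I_n -> E) : R :=
  sup [set ((\sum_(k < n) (nr `|phi (x k)|) `^ q) `^ q^-1)%R
       | phi in @dual_ball E].

Definition multilinear (m : nat) (E : 'I_m -> normedModType K) (F : normedModType K)
  (T : (forall i, E i) -> F) : Prop :=
  forall (x : forall i, E i) (i : 'I_m) (a : K) (u v : E i),
    T (@dfwith _ _ x i (a *: u + v)) = a *: T (@dfwith _ _ x i u) + T (@dfwith _ _ x i v).

Definition bounded_multilinear (m : nat) (E : 'I_m -> normedModType K)
  (F : normedModType K) (T : (forall i, E i) -> F) : Prop :=
  multilinear T /\
  exists C : R, forall x : forall i, E i, nr `|T x| <= C * \prod_(i < m) nr `|x i|.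

Definition mult_index_set (p q : R) (m : nat) (E : 'I_m -> normedModType K)
  (F : normedModType K) : set R :=
  [set s | forall T : (forall i, E i) -> F, bounded_multilinear T ->
     exists C : R, 0 <= C /\
       forall (n : nat) (X : forall i : 'I_m, 'I_n -> E i), (0 < n)%N ->
         ((\sum_(k : {ffun 'I_m -> 'I_n}) (nr `|T (fun i => X i (k i))|) `^ p)
            `^ p^-1)%R
         <= C * (n%:R `^ s)%R * \prod_(i < m) @weak_norm (E i) q n (X i)].

(* multilinear m-index of (p,q)-summability (an extended real; +oo if no s works) *)
Definition eta_mult (p q : R) (m : nat) (E : 'I_m -> normedModType K)
  (F : normedModType K) : \bar R :=
  ereal_inf [set s%:E | s in @mult_index_set p q m E F].
End Defs.

From HB Require Import structures.
From mathcomp Require Import all_boot all_order all_algebra.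
From mathcomp Require Import all_classical all_reals all_analysis.
From mathcomp Require Import complex.
From mathcomp Require Import lra ring.
Set Implicit Arguments. Unset Strict Implicit. Unset Printing Implicit Defensive.
Import Order.TTheory GRing.Theory Num.Theory.
Import numFieldNormedType.Exports.
Import ComplexField.Normc.
Local Open Scope ring_scope.

(* Every summand satisfies
   |T(x^(1)_k1, ..., x^(m)_km)| <= |T| prod_i max_k |x^(i)_k|, and a norming
   functional given by the Hahn-Banach theorem shows |x_k| <= |(x_j)_j|_{w,p}.
   Summing the n^m summands gives the exponent m/p, which is at most m/2 when
   p >= 2.  Over C, Hahn-Banach for the underlying real space yields a real
   functional f, and u |-> f u - i f (i u) is the complex one. *)

Section HahnBanach.
Local Open Scope classical_set_scope.
Variables (R : realType) (V : lmodType R) (N : V -> R).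
Hypotheses (N_triangle : forall u v, N (u + v) <= N u + N v)
  (N_homogeneous : forall (r : R) u, N (r *: u) = `|r| * N u).

Lemma seminorm0 : N 0 = 0.
Proof. by have := N_homogeneous 0 0; rewrite scale0r normr0 mul0r. Qed.

Lemma seminorm_ge0 u : 0 <= N u.
Proof.
have := N_triangle u (-1 *: u).
by rewrite N_homogeneous scaleN1r addrN seminorm0 normrN normr1 mul1r; lra.
Qed.

Variable x0 : V.

(* A linear functional on a subspace, dominated by [N] and equal to [N x0] at
   [x0], encoded by its graph. *)
Definition dominated_graph (G : set (V * R)) :=
  [/\ G (x0, N x0),
      (forall u a b, G (u, a) -> G (u, b) -> a = b),
      (forall r u v a b, G (u, a) -> G (v, b) -> G (r *: u + v, r * a + b))
    & (forall u a, G (u, a) -> a <= N u)].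

Lemma dominated_graph0 G : dominated_graph G -> G (0, 0).
Proof.
case=> Gx0 _ Glin _; have := Glin (-1) _ _ _ _ Gx0 Gx0.
by rewrite scaleN1r mulN1r !addNr.
Qed.

Lemma dominated_graphZ G r u a :
  dominated_graph G -> G (u, a) -> G (r *: u, r * a).
Proof.
move=> gG Gu; have [_ _ Glin _] := gG.
by have := Glin r _ _ _ _ Gu (dominated_graph0 gG); rewrite !addr0.
Qed.

Lemma dominated_graph_gap G y u v a b : dominated_graph G ->
  G (u, a) -> G (v, b) -> b - N (v - y) <= N (u + y) - a.
Proof.
move=> [_ _ Glin Gle] Gu Gv.
have := Gle _ _ (Glin 1 _ _ _ _ Gu Gv); rewrite scale1r mul1r => Guv.
have := N_triangle (u + y) (v - y).
by rewrite addrACA subrr addr0; lra.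
Qed.

Definition graph_extension G y c : set (V * R) :=
  [set z | exists u a t, G (u, a) /\ z = (u + t *: y, a + t * c)].

Lemma graph_extension_functional G y c u1 u2 a1 a2 t1 t2 :
  dominated_graph G -> ~ (exists a, G (y, a)) ->
  G (u1, a1) -> G (u2, a2) -> u1 + t1 *: y = u2 + t2 *: y ->
  a1 + t1 * c = a2 + t2 * c.
Proof.
move=> gG ny G1 G2 e; have [_ Gfun Glin _] := gG.
have [t12|t12] := eqVneq t1 t2.
  by subst t2; move/addIr: e => e; rewrite e in G1; rewrite (Gfun _ _ _ G1 G2).
exfalso; apply: ny; exists ((t1 - t2)^-1 * (a2 - a1)).
have := Glin (-1) _ _ _ _ G1 G2; rewrite scaleN1r mulN1r addrC [- a1 + _]addrC.
move=> /(dominated_graphZ (t1 - t2)^-1 gG).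
suff -> : u2 - u1 = (t1 - t2) *: y by rewrite scalerA mulVf ?subr_eq0 ?scale1r.
rewrite scalerBl; apply: (addIr (t2 *: y)).
by rewrite subrK addrAC -e addrAC subrr add0r.
Qed.

Section Extension.
Variables (G : set (V * R)) (y : V) (c : R).
Hypotheses (gG : dominated_graph G)
  (c_ge : forall v b, G (v, b) -> b - N (v - y) <= c)
  (c_le : forall u a, G (u, a) -> c <= N (u + y) - a).

Lemma graph_extension_le u a t : G (u, a) -> a + t * c <= N (u + t *: y).
Proof.
move=> Gu; have [_ _ _ Gle] := gG.
have [t0|t0|->] := ltgtP t 0; last by rewrite scale0r mul0r !addr0; exact: Gle.
- have s0 : 0 < - t by rewrite oppr_gt0.
  have := c_ge (dominated_graphZ (- t)^-1 gG Gu).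
  have -> : (- t)^-1 *: u - y = (- t)^-1 *: (u + t *: y).
    by rewrite scalerDr scalerA invrN mulNr mulVf ?lt_eqF // scaleN1r.
  rewrite N_homogeneous gtr0_norm ?invr_gt0 // => h.
  have := ler_wpM2l (ltW s0) h.
  by rewrite mulrBr !mulrA divff ?gt_eqF // !mul1r; lra.
- have := c_le (dominated_graphZ t^-1 gG Gu).
  have -> : t^-1 *: u + y = t^-1 *: (u + t *: y).
    by rewrite scalerDr scalerA mulVf ?gt_eqF // scale1r.
  rewrite N_homogeneous gtr0_norm ?invr_gt0 // => h.
  have := ler_wpM2l (ltW t0) h.
  by rewrite mulrBr !mulrA divff ?gt_eqF // !mul1r; lra.
Qed.

Lemma dominated_graph_extension : ~ (exists a, G (y, a)) ->
  dominated_graph (graph_extension G y c).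
Proof.
move=> ny; have [Gx0 _ Glin _] := gG; split.
- by exists x0, (N x0), 0; rewrite scale0r mul0r !addr0.
- move=> w a' b' [u1 [a1 [t1 [G1 [-> ->]]]]] [u2 [a2 [t2 [G2 [e ->]]]]].
  exact: graph_extension_functional ny G1 G2 e.
- move=> r w1 w2 a' b' [u1 [a1 [t1 [G1 [-> ->]]]]] [u2 [a2 [t2 [G2 [-> ->]]]]].
  exists (r *: u1 + u2), (r * a1 + a2), (r * t1 + t2); split; first exact: Glin.
  congr pair; last by ring.
  by rewrite scalerDr scalerA addrACA -scalerDl.
- by move=> w a' [u [a [t [Gu [-> ->]]]]]; exact: graph_extension_le.
Qed.

End Extension.

Lemma dominated_graph_extend G y : dominated_graph G ->
  ~ (exists a, G (y, a)) -> exists2 G', dominated_graph G' & G `<` G'.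
Proof.
move=> gG ny; have [Gx0 _ _ _] := gG.
pose L := [set z | exists v b, G (v, b) /\ z = b - N (v - y)].
have L0 : L !=set0 by exists (N x0 - N (x0 - y)), x0, (N x0).
have L_ub : has_ubound L.
  exists (N (x0 + y) - N x0) => _ [v [b [Gv ->]]].
  exact: dominated_graph_gap gG Gx0 Gv.
have c_ge v b : G (v, b) -> b - N (v - y) <= sup L.
  by move=> Gv; apply: ub_le_sup => //; exists v, b.
have c_le u a : G (u, a) -> sup L <= N (u + y) - a.
  move=> Gu; apply: ge_sup => // _ [v [b [Gv ->]]].
  exact: dominated_graph_gap gG Gu Gv.
exists (graph_extension G y (sup L)); first exact: dominated_graph_extension.
split=> [[u a] Gu|sub]; first by exists u, a, 0; rewrite scale0r mul0r !addr0.
apply: ny; exists (sup L); apply: sub; exists 0, 0, 1.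
by rewrite scale1r mul1r !add0r; split => //; exact: dominated_graph0.
Qed.

Lemma dominated_graph_line :
  dominated_graph [set z | exists t, z = (t *: x0, t * N x0)].
Proof.
split.
- by exists 1; rewrite scale1r mul1r.
- move=> u a b [t [-> ->]] [t' [e ->]].
  have [->|x0_neq0] := eqVneq x0 0; first by rewrite seminorm0 !mulr0.
  have /eqP : (t - t') *: x0 = 0 by rewrite scalerBl e subrr.
  by rewrite scaler_eq0 (negbTE x0_neq0) orbF subr_eq0 => /eqP ->.
- move=> r u v a b [t [-> ->]] [t' [-> ->]]; exists (r * t + t').
  by rewrite scalerDl scalerA mulrDl mulrA.
- move=> u a [t [-> ->]]; rewrite N_homogeneous ler_wpM2r ?seminorm_ge0 //.
  exact: ler_norm.
Qed.

(* [set0] is admitted so that the empty chain has an upper bound in Zorn's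
   lemma. *)
Lemma dominated_graph_bigcup (F : set (set (V * R))) :
  (forall X, F X -> X = set0 \/ dominated_graph X) -> total_on F subset ->
  let U := \bigcup_(X in F) X in U = set0 \/ dominated_graph U.
Proof.
move=> FP Ftot U.
have graphF X z : F X -> X z -> dominated_graph X.
  by move=> FX Xz; case: (FP _ FX) => // X0; rewrite X0 in Xz.
have [[X FX gX]|noX] := pselect (exists2 X, F X & dominated_graph X); last first.
  left; apply/seteqP; split => // z [X FX Xz]; apply: noX; exists X => //.
  exact: graphF Xz.
have common X1 X2 z1 z2 : F X1 -> F X2 -> X1 z1 -> X2 z2 ->
    exists2 Y, F Y & Y z1 /\ Y z2.
  move=> F1 F2 X1z X2z; have [h|h] := Ftot _ _ F1 F2.
    by exists X2 => //; split => //; exact: h.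
  by exists X1 => //; split => //; exact: h.
right; have [Gx0 _ _ _] := gX; split.
- by exists X.
- move=> u a b [X1 F1 X1u] [X2 F2 X2u].
  have [Y FY [Y1 Y2]] := common _ _ _ _ F1 F2 X1u X2u.
  by have [_ Yfun _ _] := graphF _ _ FY Y1; exact: Yfun Y1 Y2.
- move=> r u v a b [X1 F1 X1u] [X2 F2 X2v].
  have [Y FY [Y1 Y2]] := common _ _ _ _ F1 F2 X1u X2v.
  by exists Y => //; have [_ _ Ylin _] := graphF _ _ FY Y1; exact: Ylin Y1 Y2.
- move=> u a [X1 F1 X1u].
  by have [_ _ _ Xle] := graphF _ _ F1 X1u; exact: Xle X1u.
Qed.

Theorem hahn_banach_seminorm : exists f : V -> R,
  [/\ forall r u v, f (r *: u + v) = r * f u + f v,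
      forall u, f u <= N u & f x0 = N x0].
Proof.
have [A [PA maxA]] := Zorn_bigcup dominated_graph_bigcup.
have gA : dominated_graph A.
  case: PA => // A0; exfalso; apply: (maxA _ _ (or_intror dominated_graph_line)).
  rewrite A0; split => // /(_ (x0, N x0)); apply.
  by exists 1; rewrite scale1r mul1r.
have Atotal y : exists a, A (y, a).
  apply: contrapT => ny; have [G' gG' AG'] := dominated_graph_extend gA ny.
  exact: maxA _ AG' (or_intror gG').
pose f y := projT1 (cid (Atotal y)).
have Af y : A (y, f y) by rewrite /f; case: cid.
have [Ax0 Afun Alin Ale] := gA.
exists f; split.
- by move=> r u v; apply: Afun (Af _) _; exact: Alin.
- by move=> u; exact: Ale.
- exact: Afun (Af _) Ax0.
Qed.

End HahnBanach.

Local Open Scope complex_scope.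

Section Realification.
Variables (R : realType) (E : lmodType R[i]).

Definition realify : Type := E.
HB.instance Definition _ := GRing.Zmodule.on realify.

Definition realify_scale (r : R) (x : realify) : realify := r%:C *: (x : E).

Lemma realify_scaleA a b v :
  realify_scale a (realify_scale b v) = realify_scale (a * b) v.
Proof. by rewrite /realify_scale scalerA -rmorphM. Qed.

Lemma realify_scale1 : left_id 1 realify_scale.
Proof. by move=> v; rewrite /realify_scale rmorph1 scale1r. Qed.

Lemma realify_scaleDr : right_distributive realify_scale +%R.
Proof. by move=> a u v; rewrite /realify_scale scalerDr. Qed.

Lemma realify_scaleDl v : {morph realify_scale^~ v : a b / a + b}.
Proof. by move=> a b; rewrite /realify_scale rmorphD scalerDl. Qed.

HB.instance Definition _ := GRing.Zmodule_isLmodule.Build R realify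
  realify_scaleA realify_scale1 realify_scaleDr realify_scaleDl.

End Realification.

Lemma normcR (R : rcfType) (r : R) : normc r%:C = `|r|.
Proof. by rewrite /normc /= expr0n /= addr0 sqrtr_sqr. Qed.

Lemma normc_ge0 (R : rcfType) (z : R[i]) : 0 <= normc z.
Proof. by case: z => a b; exact: sqrtr_ge0. Qed.

Lemma Re_le_normc (R : rcfType) (z : R[i]) : complex.Re z <= normc z.
Proof.
case: z => a b; rewrite /normc /=; apply: le_trans (ler_norm a) _.
by rewrite -sqrtr_sqr ler_wsqrtr // lerDl sqr_ge0.
Qed.

Lemma normr_complexE (R : rcfType) (z : R[i]) : `|z| = (normc z)%:C.
Proof. by rewrite normc_def; case: z. Qed.

Lemma Re_normr (R : rcfType) (z : R[i]) : complex.Re `|z| = normc z.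
Proof. by rewrite normr_complexE. Qed.

Section Complexification.
Variables (R : realType) (E : lmodType R[i]) (f : realify E -> R).
Hypothesis f_linear : forall (r : R) (u v : realify E), f (r *: u + v) = r * f u + f v.

(* Any complex-linear [phi] satisfies [Im (phi u) = - Re (phi ('i *: u))]. *)
Definition complexify (u : E) : R[i] := f u +i* - f ('i *: u).

Let fD u v : f (u + v) = f u + f v.
Proof. by have := f_linear 1 u v; rewrite scale1r mul1r. Qed.

Let fZ (r : R) (u : E) : f (r%:C *: u) = r * f u.
Proof.
have f0 : f 0 = 0 by have := f_linear 1 0 0; rewrite scale1r addr0 mul1r; lra.
by have := f_linear r u 0; rewrite addr0 f0 addr0.
Qed.

Lemma complexifyD u v : complexify (u + v) = complexify u + complexify v.
Proof. by rewrite /complexify scalerDr !fD /=; congr (_ +i* _); rewrite opprD. Qed.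

Lemma complexifyZ a u : complexify (a *: u) = a * complexify u.
Proof.
have fN u' : f (- u') = - f u'.
  by have := fZ (-1) u'; rewrite rmorphN rmorph1 scaleN1r mulN1r.
case: a => ar ai.
have -> : (ar +i* ai) *: u = ar%:C *: u + ai%:C *: ('i *: u).
  by rewrite scalerA -scalerDl; congr (_ *: _); rewrite /=; congr (_ +i* _); ring.
have i_rot : 'i *: (ar%:C *: u + ai%:C *: ('i *: u))
        = ar%:C *: ('i *: u) + ai%:C *: (- u).
  rewrite scalerDr !scalerA; congr (_ + _); first by rewrite mulrC.
  by rewrite scalerN -scaleNr; congr (_ *: _); rewrite /=; congr (_ +i* _); ring.
by rewrite /complexify i_rot !fD !fZ fN /=; congr (_ +i* _); ring.
Qed.

Lemma normc_complexify_le (N : E -> R) :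
  (forall c u, N (c *: u) = normc c * N u) -> (forall u, 0 <= N u) ->
  (forall u, f u <= N u) -> forall u, normc (complexify u) <= N u.
Proof.
move=> N_homogeneous N_ge0 f_le u.
have [->|z_neq0] := eqVneq (complexify u) 0; first by rewrite normc0.
have nz_neq0 : normc (complexify u) != 0.
  by apply: contra z_neq0 => /eqP/eq0_normc ->.
(* rotate [u] so that the value of [complexify] becomes real and nonnegative *)
pose c := (normc (complexify u))%:C / complexify u.
have c_unit : normc c = 1.
  by rewrite normcM normcV normcR ger0_norm ?normc_ge0 ?divff.
have := f_le (c *: u : realify E).
have -> : f (c *: u) = normc (complexify u).
  by have := complexifyZ c u; rewrite mulfVK // => -[].
by rewrite N_homogeneous c_unit mul1r.
Qed.

End Complexification.

Theorem hahn_banach_complex (R : realType) (E : lmodType R[i]) (N : E -> R) :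
  (forall u v, N (u + v) <= N u + N v) ->
  (forall (c : R[i]) u, N (c *: u) = normc c * N u) ->
  forall x0 : E, exists phi : E -> R[i],
    [/\ forall a u v, phi (a *: u + v) = a * phi u + phi v,
        forall u, normc (phi u) <= N u & N x0 <= normc (phi x0)].
Proof.
move=> N_triangle N_homogeneous x0.
have N_homogeneousR (r : R) (u : realify E) : N (r *: u) = `|r| * N u.
  by rewrite -normcR; exact: N_homogeneous.
have [f [f_lin f_le fx0]] :=
  @hahn_banach_seminorm R (realify E) N N_triangle N_homogeneousR x0.
exists (complexify f); split.
- by move=> a u v; rewrite complexifyD ?complexifyZ.
- apply: normc_complexify_le => // u.
  exact: (@seminorm_ge0 R (realify E) N N_triangle N_homogeneousR u).
- by rewrite -fx0; exact: Re_le_normc (complexify f x0).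
Qed.

Lemma linear_contraction_dual_ball (R : realType) (K : numFieldType)
    (nr : K -> R) (E : normedModType K) (phi : E -> K) :
  (forall a x y, phi (a *: x + y) = a * phi x + phi y) ->
  (forall x, `|phi x| <= `|x|) -> (forall x, nr `|phi x| <= nr `|x|) ->
  dual_ball nr phi.
Proof.
move=> phi_lin phi_le nr_le; split => //; split => // x.
have phiB y z : phi (y - z) = phi y - phi z.
  by have := phi_lin (-1) z y; rewrite scaleN1r mulN1r addrC => ->; rewrite addrC.
apply/(@cvgrPdist_lt K K^o) => e e0; apply/nbhs_normP.
by exists e => //= y; rewrite -phiB; exact/le_lt_trans.
Qed.

Lemma real_norming_functional (R : realType) (E : normedModType R) (x : E) :
  exists2 phi, dual_ball (@id R) phi & `|x| <= `|phi x|.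
Proof.
have [f [f_lin f_le fx]] := hahn_banach_seminorm (@ler_normD _ E) (@normrZ _ E) x.
have f0 : f 0 = 0 by have := f_lin 1 0 0; rewrite scale1r addr0 mul1r; lra.
have f_abs u : `|f u| <= `|u|.
  rewrite ler_norml f_le andbT; have := f_le (- u); rewrite normrN.
  by have := f_lin (-1) u 0; rewrite scaleN1r addr0 f0 addr0 mulN1r => ->; lra.
exists f; last by rewrite fx normr_id.
exact: linear_contraction_dual_ball.
Qed.

Lemma complex_norming_functional (R : realType) (E : normedModType R[i]) (x : E) :
  exists2 phi, dual_ball (@complex.Re R) phi &
    complex.Re `|x| <= complex.Re `|phi x|.
Proof.
have ReD (a b : R[i]) : complex.Re (a + b) = complex.Re a + complex.Re b.
  by case: a; case: b.
have N_triangle (u v : E) :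
    complex.Re `|u + v| <= complex.Re `|u| + complex.Re `|v|.
  by rewrite -ReD; have := ler_normD u v; rewrite lecE => /andP[].
have N_homogeneous (c : R[i]) (u : E) :
    complex.Re `|c *: u| = normc c * complex.Re `|u|.
  by rewrite normrZ normr_complexE; case: `|u| => a b /=; rewrite mul0r subr0.
have [phi [phi_lin phi_le phi_x]] := hahn_banach_complex N_triangle N_homogeneous x.
have realE (z : R[i]) : 0 <= z -> z = (complex.Re z)%:C.
  by move=> /ger0_real /RRe_real ->.
exists phi; last by rewrite Re_normr.
apply: linear_contraction_dual_ball => // y.
by rewrite [`|y|]realE // [`|phi y|]realE // lecR Re_normr.
Qed.

Section DiagonalIndex.
Local Open Scope classical_set_scope.
Variables (R : realType) (K : numFieldType) (nr : K -> R).
Hypothesis nr_ge0 : forall z : K, 0 <= nr `|z|.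
Variables (p : R) (p_gt0 : 0 < p).

Lemma powRK (a : R) : 0 <= a -> (a `^ p) `^ p^-1 = a.
Proof. by move=> a_ge0; rewrite -powRrM divff ?gt_eqF // powRr1. Qed.

Lemma ler_powR_nneg (r a b : R) : 0 <= r -> 0 <= a -> a <= b -> a `^ r <= b `^ r.
Proof.
by move=> r_ge0 a_ge0 ab; apply: ge0_ler_powR; rewrite ?nnegrE // (le_trans a_ge0).
Qed.

Lemma nr_normv_ge0 (E : normedModType K) (x : E) : 0 <= nr `|x|.
Proof. by rewrite -normr_id. Qed.

Lemma norm_le_weak_norm (E : normedModType K) n (X : 'I_n -> E) (k : 'I_n) :
  (exists2 phi, dual_ball nr phi & nr `|X k| <= nr `|phi (X k)|) ->
  nr `|X k| <= weak_norm nr p X.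
Proof.
move=> [phi phi_ball Xk_le].
have pinv_ge0 : 0 <= p^-1 by rewrite invr_ge0 ltW.
pose S := [set ((\sum_(j < n) (nr `|psi (X j)|) `^ p) `^ p^-1)%R
          | psi in @dual_ball R K nr E].
have S_ub : has_ubound S.
  exists ((\sum_(j < n) (nr `|X j|) `^ p) `^ p^-1) => _ [psi [_ [_ psi_le]] <-].
  apply: ler_powR_nneg => //; first by rewrite sumr_ge0 // => *; exact: powR_ge0.
  by apply: ler_sum => j _; exact: ler_powR_nneg (ltW p_gt0) (nr_ge0 _) (psi_le _).
apply: le_trans Xk_le (le_trans _ (ub_le_sup S_ub (imageP _ phi_ball))).
rewrite -{1}(powRK (nr_ge0 (phi (X k)))) ler_powR_nneg ?powR_ge0 //.
by rewrite (bigD1 k) //= lerDl sumr_ge0 // => *; exact: powR_ge0.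
Qed.

Lemma lp_norm_const_ffun m n (B : R) : 0 <= B ->
  ((\sum_(k : {ffun 'I_m -> 'I_n}) B `^ p) `^ p^-1)%R = n%:R `^ (m%:R / p) * B.
Proof.
move=> B_ge0; rewrite sumr_const card_ffun !card_ord -[_ `^ p *+ _]mulr_natl natrX.
by rewrite powRM ?exprn_ge0 ?powR_ge0 // powRK // -powR_mulrn // -powRrM.
Qed.

Variables (m : nat) (E : 'I_m -> normedModType K) (F : normedModType K).
Hypothesis norming : forall i (x : E i),
  exists2 phi, dual_ball nr phi & nr `|x| <= nr `|phi x|.

Lemma mdivp_in_mult_index_set : mult_index_set nr p p E F (m%:R / p).
Proof.
move=> T [_ [C T_le]]; exists `|C|; split => // n X n_gt0.
pose w i := weak_norm nr p (X i).
have X_le_w i k : nr `|X i k| <= w i by apply: norm_le_weak_norm; exact: norming.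
have w_ge0 i : 0 <= w i := le_trans (nr_normv_ge0 _) (X_le_w i (Ordinal n_gt0)).
have CW_ge0 : 0 <= `|C| * \prod_(i < m) w i by rewrite mulr_ge0 ?prodr_ge0.
have summand_le (k : {ffun 'I_m -> 'I_n}) :
    (nr `|T (fun i => X i (k i))|) `^ p <= (`|C| * \prod_(i < m) w i) `^ p.
  apply: ler_powR_nneg (ltW p_gt0) (nr_normv_ge0 _) (le_trans (T_le _) _).
  have P_ge0 : 0 <= \prod_(i < m) nr `|X i (k i)|.
    by apply: prodr_ge0 => i _; exact: nr_normv_ge0.
  rewrite (le_trans (ler_wpM2r P_ge0 (ler_norm C))) // ler_wpM2l //.
  by apply: ler_prod => i _; rewrite nr_normv_ge0 X_le_w.
apply: le_trans (ler_powR_nneg _ _ (ler_sum _ (fun k _ => summand_le k))) _.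
- by rewrite invr_ge0 ltW.
- by rewrite sumr_ge0 // => *; exact: powR_ge0.
by rewrite lp_norm_const_ffun // mulrCA mulrA.
Qed.

Lemma eta_mult_diag_le :
  ((p <= 2) -> (eta_mult nr p p E F <= (m%:R / p)%:E)%E) /\
  ((2 <= p) -> (eta_mult nr p p E F <= (m%:R / 2)%:E)%E).
Proof.
have eta_le : (eta_mult nr p p E F <= (m%:R / p)%:E)%E.
  by apply: ereal_inf_lbound; exists (m%:R / p) => //; exact: mdivp_in_mult_index_set.
split => // p_ge2; apply: le_trans eta_le _.
by rewrite lee_fin ler_wpM2l // lef_pV2 // posrE.
Qed.

End DiagonalIndex.

Unset Implicit Arguments.

Theorem mainTheorem2 (R : realType) (p : R) (hp : 0 < p) (m : nat) :
  (* K = R *)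
  (forall (E : 'I_m -> completeNormedModType R) (F : completeNormedModType R),
     ((p <= 2) -> (eta_mult (@id R) p p (fun i => E i : normedModType R) F
                   <= (m%:R / p)%:E)%E) /\
     ((2 <= p) -> (eta_mult (@id R) p p (fun i => E i : normedModType R) F
                   <= (m%:R / 2)%:E)%E)) /\
  (* K = C = R[i] *)
  (forall (E : 'I_m -> completeNormedModType R[i]) (F : completeNormedModType R[i]),
     ((p <= 2) -> (eta_mult (@complex.Re R) p p (fun i => E i : normedModType R[i]) F
                   <= (m%:R / p)%:E)%E) /\
     ((2 <= p) -> (eta_mult (@complex.Re R) p p (fun i => E i : normedModType R[i]) F
                   <= (m%:R / 2)%:E)%E)).
Proof.
split=> E F; apply: eta_mult_diag_le => //.
- by move=> i; exact: real_norming_functional.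
- by move=> z; rewrite Re_normr normc_ge0.
- by move=> i; exact: complex_norming_functional.
Qed.
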